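(* Let $m\ge 2$, and let $C_1,\dots,C_m>0$, $\mu^c_1,\dots,\mu^c_m\ge 0$, $\theta^c_1,\dots,\theta^c_m\ge 0$ and $\lambda^c\ge 0$ be real numbers. Consider the system of ordinary differential equations $$\begin{aligned} x_1'(t)&=\mu^c_1\frac{C_1-x_1}{C_1}-\theta^c_1x_1-\mu^c_2\frac{x_1}{C_1}\frac{C_2-x_2}{C_2},\\ x_i'(t)&=\mu^c_i\frac{x_{i-1}}{C_{i-1}}\frac{C_i-x_i}{C_i}-\theta^c_ix_i-\mu^c_{i+1}\frac{x_i}{C_i}\frac{C_{i+1}-x_{i+1}}{C_{i+1}},\qquad 2\le i\le m-1,\\ x_m'(t)&=\mu^c_m\frac{x_{m-1}}{C_{m-1}}\frac{C_m-x_m}{C_m}-\theta^c_mx_m-\lambda^c, \end{aligned}$$ where $x_i=x_i(t)$. Let $(x_1^*,\dots,x_m^* )$ be an equilibrium point of this system (a point where all right-hand sides vanish) with $0\le x_i^*\le C_i$ for $i=1,\dots,m$. If $$\frac{\mu^c_2}{C_1}<\frac{\mu^c_1}{C_1}+\theta^c_1,\qquad \frac{\mu^c_i}{C_{i-1}}+\frac{\mu^c_{i+1}}{C_{i+1}}<\theta^c_i\ \ (2\le i\le m-1),\qquad \frac{\mu^c_m}{C_{m-1}}<\theta^c_m,$$ then $(x_1^*,\dots,x_m^* )$ is a stable equilibrium point (all eigenvalues of the Jacobian of the system at this point have negative real part).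
   Context: The system models an $m$-echelon inventory system in which the warehouses of each echelon are aggregated into one warehouse: $x_i(t)$ is the inventory level of echelon $i$, $C_i$ its maximum inventory level, $\mu^c_i$ its maximum supply rate, $\theta^c_i$ its average deterioration percentage per unit time, and $\lambda^c$ is the demand rate at the lowest echelon $m$. When $m=2$ there are no middle equations and no middle conditions. *)

From HB Require Import structures.
From mathcomp Require Import all_boot all_order all_algebra.
From mathcomp Require Import all_classical all_reals all_analysis.
From mathcomp Require Import complex.
Set Implicit Arguments. Unset Strict Implicit. Unset Printing Implicit Defensive.
Import Order.TTheory GRing.Theory Num.Theory.
Local Open Scope ring_scope.

(* State vector x = (x_1, ..., x_m) is a row vector x : 'rV[R]_m;
   x_k (1-based, 1 <= k <= m) is stored at column k-1.
   Out of range indices give 0 (never used in the system). *)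
Definition xcomp {R : realType} {m : nat} (x : 'rV[R]_m) (k : nat) : R :=
  match k with
  | 0 => 0
  | k'.+1 => if insub k' is Some j then x ord0 j else 0
  end.

(* Right-hand side of the i-th equation (1 <= i <= m), parameters
   C mu theta indexed 1..m (C i = C_i, mu i = mu^c_i, theta i = theta^c_i),
   lam = lambda^c. *)
Definition rhs {R : realType} (m : nat) (C mu theta : nat -> R) (lam : R)
    (i : nat) (x : 'rV[R]_m) : R :=
  if i == 1%N then
    mu 1%N * ((C 1%N - xcomp x 1) / C 1%N) - theta 1%N * xcomp x 1
    - mu 2%N * (xcomp x 1 / C 1%N) * ((C 2%N - xcomp x 2) / C 2%N)
  else if i == m then
    mu m * (xcomp x m.-1 / C m.-1) * ((C m - xcomp x m) / C m)
    - theta m * xcomp x m - lam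
  else
    mu i * (xcomp x i.-1 / C i.-1) * ((C i - xcomp x i) / C i)
    - theta i * xcomp x i
    - mu i.+1 * (xcomp x i / C i) * ((C i.+1 - xcomp x i.+1) / C i.+1).

Definition jacobian {R : realType} (m : nat) (C mu theta : nat -> R) (lam : R)
    (xs : 'rV[R]_m) : 'M[R]_m :=
  \matrix_(i < m, j < m)
     'D_(delta_mx ord0 j : 'rV[R]_m) (rhs C mu theta lam i.+1) xs.

Definition is_equilibrium {R : realType} (m : nat) (C mu theta : nat -> R)
    (lam : R) (xs : 'rV[R]_m) : Prop :=
  forall i : nat, (1 <= i <= m)%N -> rhs C mu theta lam i xs = 0.

Definition stable_equilibrium {R : realType} (m : nat) (C mu theta : nat -> R)
    (lam : R) (xs : 'rV[R]_m) : Prop :=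
  forall z : R[i],
    eigenvalue (map_mx (real_complex R) (jacobian C mu theta lam xs)) z ->
    complex.Re z < 0.

(* The Jacobian is tridiagonal.  Because 0 <= x_i <= C_i, its
   off-diagonal entries (the partial derivatives of the transfer terms) are
   nonnegative, and every transfer term enters one equation with a plus sign and
   the next one with a minus sign, so in each column the transfer contributions
   cancel: the column sums are -(mu_1/C_1 + theta_1) and -theta_i.  The hypotheses
   make all of them negative, and Gershgorin's theorem for columns then puts every
   eigenvalue in the open left half-plane. *)

From Pilot Require Import Defs.
From HB Require Import structures.
From mathcomp Require Import all_boot all_order all_algebra.
From mathcomp Require Import all_classical all_reals all_analysis.
From mathcomp Require Import complex ring lra zify.
Set Implicit Arguments. Unset Strict Implicit. Unset Printing Implicit Defensive.
Import Order.TTheory GRing.Theory Num.Theory.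
Import numFieldNormedType.Exports.
Local Open Scope complex_scope.
Local Open Scope ring_scope.

Lemma exists_normr_max (F : numDomainType) (I : finType) (f : I -> F) (i0 : I) :
  exists j, forall i, `|f i| <= `|f j|.
Proof.
suff [j fj_max] : exists j, forall i, i \in enum I -> `|f i| <= `|f j|.
  by exists j => i; apply: fj_max; rewrite mem_enum.
elim: (enum I) => [|x s [j fj_max]]; first by exists i0.
case/orP: (real_leVge (normr_real (f x)) (normr_real (f j))) => [fxj|fjx].
- by exists j => i /predU1P[->|/fj_max].
- by exists x => i /predU1P[->|/fj_max/le_trans->].
Qed.

Lemma eigenvalue_gershgorin_col (F : numFieldType) n (A : 'M[F]_n) z :
  eigenvalue A z -> exists j, `|z - A j j| <= \sum_(i | i != j) `|A i j|.
Proof.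
case/eigenvalueP => v vA v_neq0.
have [j0 vj0_neq0] : exists j0, v ord0 j0 != 0.
  apply/existsP; apply: contraNT v_neq0; rewrite negb_exists => /forallP v0.
  by apply/eqP/rowP => j; rewrite mxE; apply/eqP/negbNE/v0.
have [j vj_max] := exists_normr_max (v ord0) j0.
have vj_gt0 : 0 < `|v ord0 j| by apply: lt_le_trans (vj_max j0); rewrite normr_gt0.
exists j; rewrite -(ler_pM2r vj_gt0) -normrM.
have -> : (z - A j j) * v ord0 j = \sum_(i | i != j) v ord0 i * A i j.
  move/rowP/(_ j): vA; rewrite !mxE (bigD1 j) //= => vAj.
  by rewrite mulrBl -vAj; ring.
apply: le_trans (ler_norm_sum _ _ _) _; rewrite mulr_suml.
by apply: ler_sum => i _; rewrite normrM mulrC ler_wpM2l.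
Qed.

Lemma metzler_eigenvalue_Re_lt0 (R : rcfType) n (A : 'M[R]_n) :
    (forall i j, i != j -> 0 <= A i j) -> (forall j, \sum_i A i j < 0) ->
  forall z, eigenvalue (map_mx (real_complex R) A) z -> complex.Re z < 0.
Proof.
move=> offdiag_ge0 colsum_lt0 z /eigenvalue_gershgorin_col[j].
have -> : \sum_(i | i != j) `|map_mx (real_complex R) A i j|
    = (\sum_(i | i != j) A i j)%:C.
  rewrite rmorph_sum; apply: eq_bigr => i ij.
  by rewrite mxE ger0_norm // ler0c offdiag_ge0.
move=> /(le_trans (normc_ge_Re _)); rewrite mxE lecR => /(le_trans (ler_norm _)).
have := colsum_lt0 j; rewrite (bigD1 j) //=.
by case: z => x y /=; lra.
Qed.

Lemma is_derive_translate (R : numFieldType) (V W : normedModType R)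
    (f : V -> W) (a v : V) (df : W) :
  (forall (h : R) y, f (h *: v + y) = h *: df + f y) -> is_derive a v f df.
Proof.
move=> f_translate.
have quotient_df : \forall h \near dnbhs (0 : R), h^-1 *: ((f \o shift a) (h *: v) - f a) = df.
  near=> h; have h_neq0 : h != 0 by near: h; exact: nbhs_dnbhs_neq.
  by rewrite /= f_translate addrK scalerA mulVf ?scale1r.
split; first exact: is_cvg_near_cst quotient_df.
by apply: lim_near_cst; [exact: norm_hausdorff | exact: quotient_df].
Unshelve. all: by end_near.
Qed.

Lemma sum_natr_eq_mul (R : pzSemiRingType) n k (F : nat -> R) :
  \sum_(i < n) (i == k :> nat)%:R * F i = if (k < n)%N then F k else 0.
Proof.
rewrite -(@big_ord1_eq R 0 +%R F) [RHS]big_mkcond; apply: eq_bigr => i _.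
by case: eqP; rewrite ?mul1r ?mul0r.
Qed.

Section Jacobian.
Variables (R : realType) (m : nat) (C mu theta : nat -> R).
Implicit Types (a v : 'rV[R]_m).

Lemma xcompDZ (h : R) a v k : xcomp (h *: v + a) k = h * xcomp v k + xcomp a k.
Proof.
case: k => [|k] /=; first by rewrite mulr0 addr0.
by case: insub => [j|]; rewrite ?mxE ?mulr0 ?addr0.
Qed.

Lemma xcomp_out a k : (m < k)%N -> xcomp a k = 0.
Proof.
case: k => [|k] //= km; case: insubP => [j k_lt_m _|//].
by rewrite ltnS leqNgt k_lt_m in km.
Qed.

Lemma xcomp_delta (j : 'I_m) k :
  xcomp (delta_mx ord0 j : 'rV[R]_m) k = (k == j.+1)%:R.
Proof.
case: k => [|k] //=; case: insubP => [i _ <-|k_ge_m]; first by rewrite mxE eqxx.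
by rewrite eqSS; case: eqP k_ge_m => // ->; rewrite ltn_ord.
Qed.

Arguments xcomp : simpl never.

Let scalerE (x y : R) : x *: y = x * y. Proof. by []. Qed.

Global Instance is_derive_xcomp a v k : is_derive a v (xcomp^~ k) (xcomp v k).
Proof. by apply: is_derive_translate => h y; rewrite xcompDZ. Qed.

(* Row r (1-based) of the Jacobian: the entries in columns r - 1 and r + 1, and
   the NEGATED diagonal entry. *)
Definition jac_sub r a := mu r * ((C r - xcomp a r) / C r) / C r.-1.
Definition jac_super r a := mu r.+1 * (xcomp a r / C r) / C r.+1.
Definition jac_diag r a :=
  if r == 1%N then mu 1%N / C 1%N + theta 1%N + jac_sub 2 a
  else if r == m then jac_super r.-1 a + theta r
  else jac_super r.-1 a + theta r + jac_sub r.+1 a.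

(* In rows 1 and m the missing neighbours are x_0 and x_(m+1), which xcomp sets
   to 0. *)
Lemma derive_rhs lam r a v : (0 < r)%N ->
  'D_v (rhs C mu theta lam r) a =
    jac_sub r a * xcomp v r.-1 + jac_super r a * xcomp v r.+1
    - jac_diag r a * xcomp v r.
Proof.
rewrite /rhs /jac_diag /jac_sub /jac_super; case: r => [//|[_|r _]] /=.
  by rewrite derive_val !scalerE [xcomp v 0]/xcomp; ring.
case: eqP => [r_eq_m | _]; rewrite derive_val !scalerE; last by ring.
by rewrite [xcomp v r.+3]xcomp_out -?r_eq_m //; subst m; ring.
Qed.

Lemma jacobianE lam a (i j : 'I_m) :
  Defs.jacobian C mu theta lam a i j =
    (i == j.+1 :> nat)%:R * jac_sub i.+1 a + (i.+1 == j :> nat)%:R * jac_super i.+1 a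
    - (i == j :> nat)%:R * jac_diag i.+1 a.
Proof. by rewrite mxE derive_rhs // !xcomp_delta /= eqSS; ring. Qed.

Lemma jacobian_col_sum lam a (j : 'I_m) : (1 < m)%N ->
  \sum_i Defs.jacobian C mu theta lam a i j =
    - (if j == 0 :> nat then mu 1%N / C 1%N + theta 1%N else theta j.+1).
Proof.
move=> m_gt1; under eq_bigr do rewrite jacobianE.
rewrite sumrB big_split /= (sum_natr_eq_mul _ _ (fun i => jac_sub i.+1 a)).
rewrite (sum_natr_eq_mul _ _ (fun i => jac_diag i.+1 a)) /jac_diag.
case: j => [[|j] /= j_lt_m].
  by rewrite m_gt1 j_lt_m big1 => [|i _]; rewrite ?mul0r //; ring.
under eq_bigr do rewrite eqSS.
rewrite (sum_natr_eq_mul _ _ (fun i => jac_super i.+1 a)) (ltnW j_lt_m) j_lt_m.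
case: eqP => [<- | /eqP j_neq_m]; first by rewrite ltnn; ring.
by rewrite ltn_neqAle j_neq_m j_lt_m /=; ring.
Qed.

Section Nonnegativity.
Variable xs : 'rV[R]_m.
Hypothesis C_gt0 : forall i, (1 <= i <= m)%N -> 0 < C i.
Hypothesis mu_ge0 : forall i, (1 <= i <= m)%N -> 0 <= mu i.
Hypothesis xs_in_box : forall i, (1 <= i <= m)%N -> 0 <= xcomp xs i <= C i.

Lemma jac_sub_ge0 r : (2 <= r <= m)%N -> 0 <= jac_sub r xs.
Proof.
move=> r_range; have /andP[_ x_le_C] : 0 <= xcomp xs r <= C r by apply: xs_in_box; lia.
have C_gt0_r : 0 < C r by apply: C_gt0; lia.
have C_gt0_pred : 0 < C r.-1 by apply: C_gt0; lia.
have mu_ge0_r : 0 <= mu r by apply: mu_ge0; lia.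
by rewrite /jac_sub !divr_ge0 ?mulr_ge0 ?subr_ge0 ?invr_ge0 //; exact: ltW.
Qed.

Lemma jac_super_ge0 r : (1 <= r < m)%N -> 0 <= jac_super r xs.
Proof.
move=> r_range; have /andP[x_ge0 _] : 0 <= xcomp xs r <= C r by apply: xs_in_box; lia.
have C_gt0_r : 0 < C r by apply: C_gt0; lia.
have C_gt0_succ : 0 < C r.+1 by apply: C_gt0; lia.
have mu_ge0_succ : 0 <= mu r.+1 by apply: mu_ge0; lia.
by rewrite /jac_super !divr_ge0 ?mulr_ge0 ?invr_ge0 //; exact: ltW.
Qed.

Lemma jacobian_offdiag_ge0 lam (i j : 'I_m) :
  i != j -> 0 <= Defs.jacobian C mu theta lam xs i j.
Proof.
move=> i_neq_j; rewrite jacobianE (negbTE i_neq_j : (i == j :> nat) = false) mul0r subr0.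
have i_lt_m := ltn_ord i; have j_lt_m := ltn_ord j.
apply: addr_ge0; case: eqP => [i_eq | _]; rewrite ?mul0r ?mul1r //.
- by apply: jac_sub_ge0; lia.
- by apply: jac_super_ge0; lia.
Qed.

End Nonnegativity.

End Jacobian.

Theorem proposition6 (R : realType) (m : nat) (C mu theta : nat -> R) (lam : R)
    (xs : 'rV[R]_m) :
  (2 <= m)%N ->
  (forall i : nat, (1 <= i <= m)%N -> 0 < C i) ->
  (forall i : nat, (1 <= i <= m)%N -> 0 <= mu i) ->
  (forall i : nat, (1 <= i <= m)%N -> 0 <= theta i) ->
  0 <= lam ->
  is_equilibrium C mu theta lam xs ->
  (forall i : nat, (1 <= i <= m)%N -> 0 <= xcomp xs i <= C i) ->
  mu 2%N / C 1%N < mu 1%N / C 1%N + theta 1%N ->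
  (forall i : nat, (2 <= i <= m.-1)%N ->
     mu i / C i.-1 + mu i.+1 / C i.+1 < theta i) ->
  mu m / C m.-1 < theta m ->
  stable_equilibrium C mu theta lam xs.
Proof.
move=> m_gt1 C_gt0 mu_ge0 _ _ _ xs_in_box mu2_lt mid_lt mu_m_lt.
apply: metzler_eigenvalue_Re_lt0 => [i j | j].
  exact: (jacobian_offdiag_ge0 theta C_gt0 mu_ge0 xs_in_box).
have mu_div_C_ge0 i k : (1 <= i <= m)%N -> (1 <= k <= m)%N -> 0 <= mu i / C k.
  by move=> i_range k_range; rewrite divr_ge0 ?mu_ge0 // ltW ?C_gt0.
have j_lt_m := ltn_ord j.
rewrite jacobian_col_sum // oppr_lt0; case: eqP => [_ | j_neq0].
  by apply: le_lt_trans mu2_lt; apply: mu_div_C_ge0; lia.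
have [j_last | j_mid] := eqVneq j.+1 m.
  by rewrite j_last; apply: le_lt_trans mu_m_lt; apply: mu_div_C_ge0; lia.
apply: le_lt_trans (mid_lt j.+1 _); last lia.
by rewrite addr_ge0 // mu_div_C_ge0 //; lia.
Qed.
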